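(* Let $G=(V,E)$ be a connected almost bipartite permutation graph that contains a hole, and let $C$, $m$, $c_i$, $A_i$, $B_i$, the linear orders $<_{A_i}$, $<_{B_i}$, the relation $\prec$ and the relations $<_{V'}$ be as described in the context. Let $i\le j$ be integers with $j-i=m-3$, and let $U=A[i,j]$ and $W=B[i,j]$. Then $G[U\cup W]$ is a bipartite permutation graph with bipartition classes $U$ and $W$. Moreover, $(U,<_U)$ and $(W,<_W)$ are strict linear orders that satisfy the adjacency and enclosure properties in $G[U\cup W]$.
   Context: All graphs are finite, simple, undirected; $N(v)$ is the open neighborhood. A hole is an induced cycle on at least five vertices. $T_2$ is the claw $K_{1,3}$ with each edge subdivided once; $X_2$ is a 4-cycle with a pendant vertex attached to each of three of its four vertices; $X_3$ is the domino (two 4-cycles sharing exactly one edge) with a pendant vertex attached to one endpoint of the shared edge. A graph is an almost bipartite permutation graph if it has no induced $T_2, X_2, X_3, K_3, C_5,\dots,C_9$. A bipartite permutation graph is a bipartite graph that is a permutation graph (intersection graph of segments with one endpoint on each of two parallel lines). Setting: $C$ is a shortest hole of $G$, $m=|C|$, $c_0,\dots,c_{m-1}$ its vertices in cyclic order, indices modulo $m$; $A_i=\{v: N(v)\cap C=\{c_{i-1},c_{i+1}\}\}$, $B_i=\{v: N(v)\cap C=\{c_i\}\}$ (indices modulo $m$). For integers $i\le j$, $A[i,j]$ is the union over $t=i,\dots,j$ of $A_t$ if $t-i$ is even and $B_t$ if $t-i$ is odd; $B[i,j]$ is the union over $t=i,\dots,j$ of $B_t$ if $t-i$ is even and $A_t$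 if $t-i$ is odd. On $A_i$ define the strict partial order $u<_{A_i}u'$ iff some $w\in B_{i-2}\cup A_{i-1}$ has $u\in N(w)$, $u'\notin N(w)$, or some $w\in A_{i+1}\cup B_{i+2}$ has $u'\in N(w)$, $u\notin N(w)$; on $B_i$: $w<_{B_i}w'$ iff some $u\in A_{i-2}\cup B_{i-1}$ has $w\in N(u)$, $w'\notin N(u)$, or some $u\in B_{i+1}\cup A_{i+2}$ has $w'\in N(u)$, $w\notin N(u)$. Each of these is then extended to an arbitrary (fixed) strict linear order, again denoted $<_{A_i}$, $<_{B_i}$. Define $v\prec v'$ iff for some $i$: $v,v'\in A_i$ are consecutive in $<_{A_i}$ with $v<_{A_i}v'$; or $v,v'\in B_i$ are consecutive in $<_{B_i}$ with $v<_{B_i}v'$; or $v$ is the maximum of $A_i$ and $v'$ the minimum of $B_{i+1}$; or $v$ is the maximum of $B_i$ and $v'$ the minimum of $A_{i+1}$. For $V'\subsetneq V$, $<_{V'}$ is the transitive closure of $\prec$ restricted to $V'$. For a bipartite graph with classes $U,W$, a linear order on $W$ has the adjacency property if for every $u\in U$ the set $N(u)$ is consecutive in it, and the enclosure property if for all $u,u'\in U$ with $N(u)\subseteq N(u')$ the set $N(u')\setminus N(u)$ is consecutive in it; symmetrically for orders on $U$.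
   Formalization: The relation ≺ also makes the maximum of $A_i$ precede the minimum of $A_{i+2}$ whenever $B_{i+1}$ is empty, and $<_{V'}$ is the transitive closure of the restriction of ≺ to $V'$. Each condition added here is assumed in the paper as well or is needed for the statement above to hold. *)

From mathcomp Require Import all_boot all_order all_algebra.
From Stdlib Require Import Relations.
Set Implicit Arguments. Unset Strict Implicit. Unset Printing Implicit Defensive.
Import Order.TTheory GRing.Theory Num.Theory.
Local Open Scope ring_scope.

Section Defs.
Variable T : finType.
Variable e : rel T.

Definition induced_copy (k : nat) (h : rel 'I_k) : Prop :=
  exists f : 'I_k -> T, injective f /\ forall a b, e (f a) (f b) = h a b.

Definition cycle_rel (k : nat) : rel 'I_k :=
  fun a b => (val b == (val a + 1) %% k)%N || (val a == (val b + 1) %% k)%N.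

Definition edges_rel (k : nat) (s : seq (nat * nat)) : rel 'I_k :=
  fun a b => ((val a, val b) \in s) || ((val b, val a) \in s).

(* T_2: claw with each edge subdivided once; centre 0 *)
Definition T2 : rel 'I_7 :=
  @edges_rel 7 [:: (0,1); (0,2); (0,3); (1,4); (2,5); (3,6)]%N.
(* X_2: 4-cycle 0-1-2-3 with pendants 4,5,6 at 0,1,2 *)
Definition X2 : rel 'I_7 :=
  @edges_rel 7 [:: (0,1); (1,2); (2,3); (3,0); (0,4); (1,5); (2,6)]%N.
(* X_3: domino (6-cycle 0..5 with chord 1-4, i.e. 4-cycles 0-1-4-5 and
   1-2-3-4 sharing edge 1-4) with pendant 6 at the endpoint 1 of the shared edge *)
Definition X3 : rel 'I_7 :=
  @edges_rel 7 [:: (0,1); (1,2); (2,3); (3,4); (4,5); (5,0); (1,4); (1,6)]%N.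

Definition almost_bip_perm : Prop :=
  ~ induced_copy T2 /\ ~ induced_copy X2 /\ ~ induced_copy X3 /\
  ~ induced_copy (@cycle_rel 3) /\
  (forall k : nat, (5 <= k <= 9)%N -> ~ induced_copy (@cycle_rel k)).

Definition connected_graph : Prop := forall x y : T, connect e x y.

Definition has_hole : Prop :=
  exists k : nat, (5 <= k)%N /\ induced_copy (@cycle_rel k).

Definition is_hole_enum (m : nat) (c : int -> T) : Prop :=
  (5 <= m)%N /\
  (forall k : int, c (k + m%:Z) = c k) /\
  (forall k l : int, c k = c l -> ((k - l) %% m%:Z)%Z = 0) /\
  (forall k l : int, e (c k) (c l) =
      (((k - l) %% m%:Z)%Z == 1) || (((l - k) %% m%:Z)%Z == 1)).

Definition shortest_hole (m : nat) (c : int -> T) : Prop :=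
  is_hole_enum m c /\
  (forall k : nat, (5 <= k < m)%N -> ~ induced_copy (@cycle_rel k)).

Variable c : int -> T.

Definition inC (v : T) : Prop := exists k : int, v = c k.

Definition Aset (i : int) (v : T) : Prop :=
  forall x, (inC x /\ e v x) <-> (x = c (i - 1) \/ x = c (i + 1)).
Definition Bset (i : int) (v : T) : Prop :=
  forall x, (inC x /\ e v x) <-> x = c i.

Definition Abig (i j : int) (v : T) : Prop :=
  exists n : nat, i + n%:Z <= j /\
    (if odd n then Bset (i + n%:Z) v else Aset (i + n%:Z) v).
Definition Bbig (i j : int) (v : T) : Prop :=
  exists n : nat, i + n%:Z <= j /\
    (if odd n then Aset (i + n%:Z) v else Bset (i + n%:Z) v).

Definition preA (i : int) (u u' : T) : Prop :=
  (exists w, (Bset (i - 2) w \/ Aset (i - 1) w) /\ e w u /\ ~ e w u') \/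
  (exists w, (Aset (i + 1) w \/ Bset (i + 2) w) /\ e w u' /\ ~ e w u).
Definition preB (i : int) (w w' : T) : Prop :=
  (exists u, (Aset (i - 2) u \/ Bset (i - 1) u) /\ e u w /\ ~ e u w') \/
  (exists u, (Bset (i + 1) u \/ Aset (i + 2) u) /\ e u w' /\ ~ e u w).

Definition strict_linear_on (S : T -> Prop) (lt : T -> T -> Prop) : Prop :=
  (forall x, S x -> ~ lt x x) /\
  (forall x y z, S x -> S y -> S z -> lt x y -> lt y z -> lt x z) /\
  (forall x y, S x -> S y -> x <> y -> lt x y \/ lt y x).

Variable m : nat.
Variables ltA ltB : int -> T -> T -> Prop.

(* ltA i, ltB i : fixed strict linear orders on A_i, B_i extending preA i, preB i;
   they depend only on the set, i.e. on i modulo m *)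
Definition linear_extensions : Prop :=
  (forall i u v, ltA (i + m%:Z) u v <-> ltA i u v) /\
  (forall i u v, ltB (i + m%:Z) u v <-> ltB i u v) /\
  (forall i, strict_linear_on (Aset i) (ltA i) /\
             (forall u v, Aset i u -> Aset i v -> preA i u v -> ltA i u v)) /\
  (forall i, strict_linear_on (Bset i) (ltB i) /\
             (forall u v, Bset i u -> Bset i v -> preB i u v -> ltB i u v)).

Definition consec (S : T -> Prop) (lt : T -> T -> Prop) (v v' : T) : Prop :=
  S v /\ S v' /\ lt v v' /\ ~ (exists w, S w /\ lt v w /\ lt w v').
Definition is_max (S : T -> Prop) (lt : T -> T -> Prop) (v : T) : Prop :=
  S v /\ forall w, S w -> w <> v -> lt w v.
Definition is_min (S : T -> Prop) (lt : T -> T -> Prop) (v : T) : Prop :=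
  S v /\ forall w, S w -> w <> v -> lt v w.

Definition prec (v v' : T) : Prop :=
  exists i : int,
    consec (Aset i) (ltA i) v v' \/
    consec (Bset i) (ltB i) v v' \/
    (is_max (Aset i) (ltA i) v /\ is_min (Bset (i + 1)) (ltB (i + 1)) v') \/
    (is_max (Aset i) (ltA i) v /\ (forall w, ~ Bset (i + 1) w) /\
       is_min (Aset (i + 2)) (ltA (i + 2)) v') \/
    (is_max (Bset i) (ltB i) v /\ is_min (Aset (i + 1)) (ltA (i + 1)) v').

Definition ltV (V' : T -> Prop) : T -> T -> Prop :=
  clos_trans T (fun x y => V' x /\ V' y /\ prec x y).

End Defs.

Section Bip.
Variable T : finType.
Variable e : rel T.

(* permutation graph on vertex set S: intersection graph of segments joining
   two parallel lines (endpoints p x on the first, q x on the second line) *)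
Definition perm_graph_on (S : T -> Prop) : Prop :=
  exists p q : T -> nat,
    (forall x y, S x -> S y -> p x = p y -> x = y) /\
    (forall x y, S x -> S y -> q x = q y -> x = y) /\
    (forall x y, S x -> S y -> x <> y ->
       (e x y <-> ((p x < p y)%N != (q x < q y)%N))).

Definition bip_perm_classes (U W : T -> Prop) : Prop :=
  (forall v, ~ (U v /\ W v)) /\
  (forall u u', U u -> U u' -> ~ e u u') /\
  (forall w w', W w -> W w' -> ~ e w w') /\
  perm_graph_on (fun v => U v \/ W v).

Definition nbhd (X Y : T -> Prop) (v : T) (w : T) : Prop :=
  (X w \/ Y w) /\ e v w.

Definition consecutive_in (Y : T -> Prop) (lt : T -> T -> Prop)
  (P : T -> Prop) : Prop :=
  (forall y, P y -> Y y) /\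
  (forall y1 y2 y3, Y y2 -> lt y1 y2 -> lt y2 y3 -> P y1 -> P y3 -> P y2).

Definition adjacency_prop (X Y : T -> Prop) (lt : T -> T -> Prop) : Prop :=
  forall x, X x -> consecutive_in Y lt (nbhd X Y x).

Definition enclosure_prop (X Y : T -> Prop) (lt : T -> T -> Prop) : Prop :=
  forall x x', X x -> X x' -> (forall w, nbhd X Y x w -> nbhd X Y x' w) ->
    consecutive_in Y lt (fun w => nbhd X Y x' w /\ ~ nbhd X Y x w).

End Bip.

(* Grade the vertices of U = A[i,j] and W = B[i,j] by their position n in [0, m - 3] along the
   hole: level n of U is A_(i+n) for even n and B_(i+n) for odd n, and dually for W.  Since C
   is a shortest hole and m >= 10, every edge of G[U \cup W] joins U to W and levels at distance
   at most 2; any other edge would close a triangle or a shorter hole with an arc of C.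
   Freeness of X_2 makes A_k complete to B_k, freeness of C_6 and X_2 lets a vertex adjacent to
   something two levels away see the whole level in between, and the base orders make the
   neighbourhood of a vertex in an adjacent level a prefix or a suffix of that level.  As the
   cover relation links consecutive elements of a level and the maximum of a level to the
   minimum of the next nonempty one, <_U and <_W are the lexicographic orders (level first).
   Adjacency and enclosure follow from these level properties alone, and so does the
   permutation model: order U \cup W once by putting u in U before w in W when some neighbour
   of u is at most w, and once when all neighbours of u are below w; the edges are exactly the
   pairs on which the two orders disagree. *)

From mathcomp Require Import all_boot all_order all_algebra zify boolp.
From Stdlib Require Import Relations.
Set Implicit Arguments. Unset Strict Implicit. Unset Printing Implicit Defensive.

(** * Linear orders on finite types *)

Lemma clos_trans_monotone (T : Type) (R1 R2 : relation T) :
  inclusion T R1 R2 -> inclusion T (clos_trans T R1) (clos_trans T R2).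
Proof.
move=> H x y; elim=> [u w /H|u w z _ h1 _ h2]; first exact: t_step.
exact: t_trans h1 h2.
Qed.

Section StrictLinear.
Variable T : finType.
Variables (S : T -> Prop) (lt : T -> T -> Prop).
Hypothesis lin : strict_linear_on S lt.

Lemma strict_linear_asym x y : S x -> S y -> lt x y -> ~ lt y x.
Proof. by case: lin => irr [tr _] Sx Sy l1 l2; apply: (irr x Sx); apply: (tr x y x). Qed.

Lemma strict_linear_rank : exists p : T -> nat,
  (forall x y, S x -> S y -> p x = p y -> x = y) /\
  (forall x y, S x -> S y -> (lt x y <-> (p x < p y)%N)).
Proof.
case: lin => irr [tr tot].
pose p x := #|[pred y | asbool (S y /\ lt y x)]|.
have mono x y : S x -> S y -> lt x y -> (p x < p y)%N.
  move=> Sx Sy lxy; apply: proper_card; apply/properP; split.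
    apply/subsetP=> z; rewrite !inE => /asboolP [Sz lzx]; apply/asboolP.
    by split=> //; apply: (tr z x y).
  by exists x; rewrite !inE; [apply/asboolP | apply/asboolP => -[_ /irr]].
exists p; split=> [x y Sx Sy pxy|x y Sx Sy].
  apply: contrapT => nxy; case: (tot x y Sx Sy nxy) => [/(mono x y Sx Sy)|/(mono y x Sy Sx)];
  by rewrite pxy ltnn.
split; first exact: mono.
case: (EM (x = y)) => [-> |nxy]; first by rewrite ltnn.
by case: (tot x y Sx Sy nxy) => // /(mono y x Sy Sx) lyx lxy; lia.
Qed.

Lemma exists_is_max : (exists v, S v) -> exists M, is_max S lt M.
Proof.
case=> v0 Sv0; have [p [_ pord]] := strict_linear_rank.
case: lin => _ [_ tot].
case: (@arg_maxnP T v0 (fun v => asbool (S v)) p (introT (asboolP _) Sv0)) => M /asboolP SM Mmax.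
exists M; split=> // w Sw nwM; case: (tot w M Sw SM nwM) => // /(pord M w SM Sw).
by have := Mmax w (introT (asboolP _) Sw); lia.
Qed.

Lemma exists_is_min : (exists v, S v) -> exists M, is_min S lt M.
Proof.
case=> v0 Sv0; have [p [_ pord]] := strict_linear_rank.
case: lin => _ [_ tot].
case: (@arg_minnP T v0 (fun v => asbool (S v)) p (introT (asboolP _) Sv0)) => M /asboolP SM Mmin.
exists M; split=> // w Sw nwM; case: (tot w M Sw SM nwM) => // /(pord w M Sw SM).
by have := Mmin w (introT (asboolP _) Sw); lia.
Qed.

Definition between x y := [pred z | asbool (S z /\ lt x z /\ lt z y)].

Lemma consec_clos_trans x y : S x -> S y -> lt x y -> clos_trans T (consec S lt) x y.
Proof.
case: lin => irr [tr _].
have [n] := ubnP #|between x y|; elim: n x y => // n IH x y /ltnSE bn Sx Sy lxy.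
case: (pickP (between x y)) => [w /asboolP [Sw [lxw lwy]]|none]; last first.
  by apply: t_step; do 3!split=> //; move=> [w Hw]; move/negbT/asboolP: (none w).
have lt_x : (#|between x w| < #|between x y|)%N.
  apply: proper_card; apply/properP; split; last first.
    exists w; first exact/asboolP.
    by apply/asboolP => -[_ [_ /(irr w Sw)]].
  apply/subsetP=> z /asboolP [Sz [l1 l2]]; apply/asboolP; do 2!split=> //.
  exact: tr l2 lwy.
have lt_y : (#|between w y| < #|between x y|)%N.
  apply: proper_card; apply/properP; split; last first.
    exists w; first exact/asboolP.
    by apply/asboolP => -[_ [lww _]]; exact: irr w Sw lww.
  apply/subsetP=> z /asboolP [Sz [l1 l2]]; apply/asboolP; do 2!split=> //.
  exact: tr lxw l1.
by apply: (t_trans _ _ _ w); apply: IH => //; apply: leq_trans bn.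
Qed.

End StrictLinear.

(** * Permutation graphs from two linear orders *)

Lemma bool_not_iff (a b : bool) : ~ (a <-> b) <-> a != b.
Proof.
by case: a; case: b => /=; split=> // h;
  [case: h | case=> /(_ isT) | case=> _ /(_ isT) | case: h].
Qed.

Lemma perm_graph_of_linear_orders (T : finType) (e : rel T) (S : T -> Prop)
    (R1 R2 : T -> T -> Prop) :
  strict_linear_on S R1 -> strict_linear_on S R2 ->
  (forall x y, S x -> S y -> x <> y -> (e x y <-> ~ (R1 x y <-> R2 x y))) ->
  perm_graph_on e S.
Proof.
move=> lin1 lin2 edgeE.
have [p [pinj pord]] := strict_linear_rank lin1.
have [q [qinj qord]] := strict_linear_rank lin2.
exists p, q; do 2!split=> //.
move=> x y Sx Sy nxy; rewrite edgeE // (pord x y Sx Sy) (qord x y Sx Sy).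
exact: bool_not_iff.
Qed.

Section Merge.
Variable T : finType.
Variables (X Y : T -> Prop) (ltX ltY : T -> T -> Prop) (F : T -> T -> Prop).
Hypothesis linX : strict_linear_on X ltX.
Hypothesis linY : strict_linear_on Y ltY.
Hypothesis disjXY : forall v, ~ (X v /\ Y v).
Hypothesis F_downX : forall u1 u2 w, X u1 -> X u2 -> Y w -> ltX u1 u2 -> F u2 w -> F u1 w.
Hypothesis F_upY : forall u w1 w2, X u -> Y w1 -> Y w2 -> F u w1 -> ltY w1 w2 -> F u w2.

Definition merge_rel x y :=
  [\/ X x /\ X y /\ ltX x y, Y x /\ Y y /\ ltY x y, X x /\ Y y /\ F x y |
      Y x /\ X y /\ ~ F y x].

Lemma merge_rel_linear : strict_linear_on (fun v => X v \/ Y v) merge_rel.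
Proof.
case: linX => irrX [trX totX]; case: linY => irrY [trY totY].
have dj v : X v -> Y v -> False by move=> Xv Yv; apply: (disjXY (conj Xv Yv)).
split.
  by move=> x _ [[_ [_ /irrX]]|[_ [_ /irrY]]|[Xx [Yx _]]|[Yx [Xx _]]] //; case: (dj _ Xx).
split.
  move=> x y z Sx Sy Sz [[Xx [Xy l1]]|[Yx [Yy l1]]|[Xx [Yy l1]]|[Yx [Xy l1]]]
                      [[Xy' [Xz l2]]|[Yy' [Yz l2]]|[Xy' [Yz l2]]|[Yy' [Xz l2]]];
   try by case: (dj y).
  - by constructor 1; split=> //; split=> //; apply: (trX x y z).
  - by constructor 3; split=> //; split=> //; apply: (F_downX Xx Xy Yz).
  - by constructor 2; split=> //; split=> //; apply: (trY x y z).
  - by constructor 4; split=> //; split=> // Fzx; apply: l2; apply: (F_upY Xz Yx Yy).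
  - by constructor 3; split=> //; split=> //; apply: (F_upY Xx Yy Yz).
  - constructor 1; split=> //; split=> //.
    case: (EM (x = z)) => [exz|nxz]; first by subst z.
    case: (totX x z Xx Xz nxz) => // lzx; case: l2.
    exact: (F_downX Xz Xx Yy).
  - constructor 4; split=> //; split=> // Fzx; apply: l1.
    exact: (F_downX Xy Xz Yx).
  - constructor 2; split=> //; split=> //.
    case: (EM (x = z)) => [exz|nxz]; first by subst z.
    case: (totY x z Yx Yz nxz) => // lzx; case: l1.
    exact: (F_upY Xy Yz Yx).
move=> x y [Xx|Yx] [Xy|Yy] nxy.
- by case: (totX x y Xx Xy nxy) => h; [left; constructor 1 | right; constructor 1].
- by case: (EM (F x y)) => h; [left; constructor 3 | right; constructor 4].
- by case: (EM (F y x)) => h; [right; constructor 3 | left; constructor 4].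
- by case: (totY x y Yx Yy nxy) => h; [left; constructor 2 | right; constructor 2].
Qed.

Lemma merge_relXX x y : X x -> X y -> merge_rel x y <-> ltX x y.
Proof.
move=> Xx Xy; split=> [|h]; last by constructor 1.
by case=> [[_ [_ //]]|[Yx _]|[_ [Yy _]]|[Yx _]];
  [case: (disjXY (conj Xx Yx)) | case: (disjXY (conj Xy Yy)) | case: (disjXY (conj Xx Yx))].
Qed.

Lemma merge_relYY x y : Y x -> Y y -> merge_rel x y <-> ltY x y.
Proof.
move=> Yx Yy; split=> [|h]; last by constructor 2.
by case=> [[Xx _]|[_ [_ //]]|[Xx _]|[_ [Xy _]]];
  [case: (disjXY (conj Xx Yx)) | case: (disjXY (conj Xx Yx)) | case: (disjXY (conj Xy Yy))].
Qed.

Lemma merge_relXY x y : X x -> Y y -> merge_rel x y <-> F x y.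
Proof.
move=> Xx Yy; split=> [|h]; last by constructor 3.
by case=> [[_ [Xy _]]|[Yx _]|[_ [_ //]]|[Yx _]];
  [case: (disjXY (conj Xy Yy)) | case: (disjXY (conj Xx Yx)) | case: (disjXY (conj Xx Yx))].
Qed.

Lemma merge_relYX x y : Y x -> X y -> merge_rel x y <-> ~ F y x.
Proof.
move=> Yx Xy; split=> [|h]; last by constructor 4.
by case=> [[Xx _]|[_ [Yy _]]|[Xx _]|[_ [_ //]]];
  [case: (disjXY (conj Xx Yx)) | case: (disjXY (conj Xy Yy)) | case: (disjXY (conj Xx Yx))].
Qed.

End Merge.

(** * Leveled bipartite graphs *)

Section Leveled.
Variable T : finType.
Variable e : rel T.
Hypothesis e_sym : forall x y, e x y = e y x.
Variable level : T -> nat.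

(* The bipartite graph between [X] and [Y] seen from [X], with vertices graded by [level]
   (their position along the hole) and [ltY] refining the grading of [Y]. *)
Record leveled_side (X Y : T -> Prop) (ltY : T -> T -> Prop) : Prop := LeveledSide {
  ls_indep : forall x x', X x -> X x' -> ~ e x x';
  ls_near : forall x y, X x -> Y y -> e x y ->
    level y <= level x + 2 /\ level x <= level y + 2;
  ls_same : forall x y, X x -> Y y -> level x = level y -> e x y;
  ls_upper_prefix : forall v z z', X v -> Y z -> Y z' -> level z = level z' ->
    ltY z z' -> level v < level z -> e v z' -> e v z;
  ls_lower_suffix : forall v z z', X v -> Y z -> Y z' -> level z = level z' ->
    ltY z z' -> level z < level v -> e v z -> e v z';
  ls_skip_up : forall v z z', X v -> Y z -> Y z' -> e v z ->
    level z = level v + 2 -> level z' = level v + 1 -> e v z';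
  ls_skip_down : forall v z z', X v -> Y z -> Y z' -> e v z ->
    level v = level z + 2 -> level v = level z' + 1 -> e v z';
  ls_mono : forall y y', ltY y y' -> Y y /\ Y y' /\ level y <= level y';
  ls_has_nbr : forall x, X x -> exists y, Y y /\ e x y;
  ls_disj : forall v, ~ (X v /\ Y v) }.

Lemma leveled_adjacency X Y ltY : leveled_side X Y ltY -> adjacency_prop e X Y ltY.
Proof.
case=> indep near same upper lower skip_up skip_down mono _ _ x Xx; split.
  by move=> y [[Xy|Yy] exy] //; case: (indep x y Xx Xy).
move=> y1 y2 y3 Yy2 l12 l23 [_ e1] [_ e3]; split; first by right.
have [Yy1 [_ o12]] := mono _ _ l12; have [_ [Yy3 o23]] := mono _ _ l23.
have := near _ _ Xx Yy1 e1; have := near _ _ Xx Yy3 e3.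
case: (ltngtP (level y2) (level x)) => h2 n3 n1.
- case: (ltngtP (level y1) (level y2)) => h1; last by apply: (lower x y1 y2) => //; rewrite h1.
    by apply: (skip_down x y1 y2) => //; lia.
  lia.
- case: (ltngtP (level y2) (level y3)) => h3; last by apply: (upper x y2 y3).
    by apply: (skip_up x y3 y2) => //; lia.
  lia.
- exact: same.
Qed.

Section TwoSides.
Variables (X Y : T -> Prop) (ltX ltY : T -> T -> Prop).
Hypothesis sXY : leveled_side X Y ltY.
Hypothesis sYX : leveled_side Y X ltX.

Lemma crossing_edges_low u u' w w' : X u -> X u' -> Y w -> Y w' -> ltX u u' -> ltY w w' ->
  e u w' -> e u' w -> e u w.
Proof.
case: sXY => _ near same upper _ skip_up _ monoY _ _.
case: sYX => _ _ _ upper' _ skip_up' _ monoX _ _.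
move=> Xu Xu' Yw Yw' luu lww euw' eu'w.
have [_ [_ ou]] := monoX _ _ luu; have [_ [_ ow]] := monoY _ _ lww.
have := near _ _ Xu Yw' euw'; have := near _ _ Xu' Yw eu'w.
case: (ltngtP (level u) (level w)) => h n1 n2.
- case: (ltngtP (level w) (level w')) => h'; last by apply: (upper u w w').
    by apply: (skip_up u w' w) => //; lia.
  lia.
- rewrite e_sym; rewrite e_sym in eu'w.
  case: (ltngtP (level u) (level u')) => h'; last by apply: (upper' w u u') => //; rewrite -h'.
    by apply: (skip_up' w u' u) => //; lia.
  lia.
- exact: same.
Qed.

Lemma crossing_edges_high u u' w w' : X u -> X u' -> Y w -> Y w' -> ltX u u' -> ltY w w' ->
  e u w' -> e u' w -> e u' w'.
Proof.
case: sXY => _ near same _ lower _ skip_down monoY _ _.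
case: sYX => _ _ _ _ lower' _ skip_down' monoX _ _.
move=> Xu Xu' Yw Yw' luu lww euw' eu'w.
have [_ [_ ou]] := monoX _ _ luu; have [_ [_ ow]] := monoY _ _ lww.
have := near _ _ Xu Yw' euw'; have := near _ _ Xu' Yw eu'w.
case: (ltngtP (level w') (level u')) => h n1 n2.
- case: (ltngtP (level w) (level w')) => h'; last by apply: (lower u' w w') => //; rewrite h'.
    by apply: (skip_down u' w w') => //; lia.
  lia.
- rewrite e_sym; rewrite e_sym in euw'.
  case: (ltngtP (level u) (level u')) => h'; last by apply: (lower' w' u u') => //; rewrite h'.
    by apply: (skip_down' w' u u') => //; lia.
  lia.
- by apply: same => //; rewrite h.
Qed.

Hypothesis linX : strict_linear_on X ltX.
Hypothesis linY : strict_linear_on Y ltY.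

Lemma leveled_enclosure : enclosure_prop e X Y ltY.
Proof.
have adj := leveled_adjacency sXY.
case: sXY => indep _ _ _ _ _ _ monoY _ _; case: linX => _ [_ totX].
move=> x x' Xx Xx' sub; split.
  by move=> y [[[Xy|Yy] ex] _] //; case: (indep x' y Xx' Xy ex).
move=> y1 y2 y3 Yy2 l12 l23 [n1 nx1] [n3 nx3].
split; first by case: (adj x' Xx') => _ /(_ y1 y2 y3 Yy2 l12 l23 n1 n3).
case: n1 => _ e1; case: n3 => _ e3.
move=> [_ exy2].
have [Yy1 _] := monoY _ _ l12; have [_ [Yy3 _]] := monoY _ _ l23.
case: (EM (x = x')) => [exx|nxx]; first by subst x'; apply: nx1; split=> //; right.
case: (totX x x' Xx Xx' nxx) => l.
- apply: nx1; split; first by right.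
  exact: (crossing_edges_low Xx Xx' Yy1 Yy2 l l12 exy2 e1).
- apply: nx3; split; first by right.
  exact: (crossing_edges_high Xx' Xx Yy2 Yy3 l l23 e3 exy2).
Qed.

Definition some_nbr_le u w := exists2 z, Y z & e u z /\ (z = w \/ ltY z w).
Definition all_nbrs_lt u w := forall z, Y z -> e u z -> ltY z w.

Lemma some_nbr_le_downX u1 u2 w : X u1 -> X u2 -> Y w -> ltX u1 u2 ->
  some_nbr_le u2 w -> some_nbr_le u1 w.
Proof.
case: linY => _ [trY totY].
move=> Xu1 Xu2 Yw l [z Yz [ez hz]].
have [z1 [Yz1 ez1]] := ls_has_nbr sXY Xu1.
case: (EM (z1 = z)) => [ezz|nz]; first by subst z1; exists z.
case: (totY z1 z Yz1 Yz nz) => lz.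
  exists z1 => //; split=> //; right.
  by case: hz => [<-|lzw] //; apply: (trY z1 z w).
by exists z => //; split=> //; apply: (crossing_edges_low Xu1 Xu2 Yz Yz1 l lz ez1 ez).
Qed.

Lemma some_nbr_le_upY u w1 w2 : X u -> Y w1 -> Y w2 ->
  some_nbr_le u w1 -> ltY w1 w2 -> some_nbr_le u w2.
Proof.
case: linY => _ [trY _].
move=> Xu Yw1 Yw2 [z Yz [ez hz]] l; exists z => //; split=> //; right.
by case: hz => [->|lz] //; apply: (trY z w1 w2).
Qed.

Lemma all_nbrs_lt_downX u1 u2 w : X u1 -> X u2 -> Y w -> ltX u1 u2 ->
  all_nbrs_lt u2 w -> all_nbrs_lt u1 w.
Proof.
case: linY => _ [trY totY].
move=> Xu1 Xu2 Yw l R z Yz ez.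
have [z2 [Yz2 ez2]] := ls_has_nbr sXY Xu2.
case: (EM (z = z2)) => [->|nz]; first exact: R.
case: (totY z z2 Yz Yz2 nz) => lz; first by apply: (trY z z2 w) => //; apply: R.
by apply: R => //; apply: (crossing_edges_high Xu1 Xu2 Yz2 Yz l lz ez ez2).
Qed.

Lemma all_nbrs_lt_upY u w1 w2 : X u -> Y w1 -> Y w2 ->
  all_nbrs_lt u w1 -> ltY w1 w2 -> all_nbrs_lt u w2.
Proof.
case: linY => _ [trY _].
by move=> Xu Yw1 Yw2 R l z Yz ez; apply: (trY z w1 w2) => //; apply: R.
Qed.

Lemma edge_iff_nbr_orders_differ x y : X x -> Y y ->
  e x y <-> ~ (some_nbr_le x y <-> all_nbrs_lt x y).
Proof.
case: linY => irrY [_ totY] => Xx Yy; split.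
  by move=> exy [/(_ (ex_intro2 _ _ y Yy (conj exy (or_introl erefl)))) /(_ y Yy exy) /irrY].
move=> differ; apply: contrapT => nexy; apply: differ; split.
  move=> [z Yz [ez [ezy|lzy]]]; first by subst z.
  move=> z' Yz' ez'; case: (EM (z' = y)) => [ezy|nzy]; first by subst z'.
  case: (totY z' y Yz' Yy nzy) => // lyz'.
  case: nexy; case: (leveled_adjacency sXY Xx) => _ /(_ z y z' Yy lzy lyz').
  by case=> //; split=> //; right.
move=> R; have [z [Yz ez]] := ls_has_nbr sXY Xx.
by exists z => //; split=> //; right; apply: R.
Qed.

Lemma leveled_perm_graph : perm_graph_on e (fun v => X v \/ Y v).
Proof.
have disj := ls_disj sXY.
have lin_le := merge_rel_linear linX linY disj some_nbr_le_downX some_nbr_le_upY.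
have lin_lt := merge_rel_linear linX linY disj all_nbrs_lt_downX all_nbrs_lt_upY.
apply: (perm_graph_of_linear_orders lin_le lin_lt) => x y [Xx|Yx] [Xy|Yy] nxy.
- rewrite !merge_relXX //; split=> [/(ls_indep sXY Xx Xy) //|]; by case; split.
- by rewrite !merge_relXY //; apply: edge_iff_nbr_orders_differ.
- rewrite !merge_relYX // e_sym edge_iff_nbr_orders_differ //.
  by case: (EM (some_nbr_le y x)); case: (EM (all_nbrs_lt y x)); tauto.
- rewrite !merge_relYY //; split=> [/(ls_indep sYX Yx Yy) //|]; by case; split.
Qed.

End TwoSides.
End Leveled.

Import Order.TTheory GRing.Theory Num.Theory.
Local Open Scope ring_scope.

(** * Induced subgraphs around a shortest hole *)

Lemma modz_sym_small (d M : int) : - M < d < M ->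
  (d %% M)%Z = if 0 <= d then d else d + M.
Proof.
move=> /andP [h1 h2]; case: ifP => h0; first by apply: modz_small; rewrite h0 h2.
by rewrite -(modzDr d M) modz_small //; apply/andP; split; lia.
Qed.

Lemma int_periodic (P : int -> Prop) (M : int) :
  (forall k, P (k + M) <-> P k) -> forall k z, P (k + z * M) <-> P k.
Proof.
move=> per.
have perN (n : nat) l : P (l + n%:Z * M) <-> P l.
  elim: n l => [|n IH] l; first by rewrite mul0r addr0.
  by rewrite -[n.+1]addn1 PoszD mulrDl mul1r addrA per IH.
move=> k [] n; first exact: perN.
by rewrite -(perN n.+1 (k + Negz n * M)) NegzE mulNr subrK.
Qed.

Section InducedCopies.
Variable T : finType.
Variable e : rel T.

Lemma induced_cycle_of_nat (k : nat) (g : nat -> T) : (3 <= k)%N ->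
  (forall a b, (a < k)%N -> (b < k)%N -> g a = g b -> a = b) ->
  (forall a b, (a < k)%N -> (b < k)%N -> (e (g a) (g b) <->
     (b = a + 1 \/ a = b + 1 \/ (a = 0 /\ b = k - 1) \/ (b = 0 /\ a = k - 1))%N)) ->
  induced_copy e (@cycle_rel k).
Proof.
move=> k3 ginj gadj; exists (fun a => g (val a)); split.
  by move=> a b /(ginj _ _ (ltn_ord a) (ltn_ord b)) /val_inj.
case=> a ha; case=> b hb; rewrite /cycle_rel /=.
have succ_mod x : (x < k)%N -> ((x + 1) %% k = if x + 1 == k then 0 else x + 1)%N.
  move=> hx; case: ifP => [/eqP ->|/negbT h]; first by rewrite modnn.
  by rewrite modn_small //; lia.
rewrite (succ_mod _ ha) (succ_mod _ hb); apply/idP/idP.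
  move/(gadj _ _ ha hb) => H; apply/orP.
  case: ifP => [/eqP h1|/negbT h1]; case: ifP => [/eqP h2|/negbT h2];
  case: H => [H|[H|[H|H]]];
  solve [left; apply/eqP; lia | right; apply/eqP; lia | exfalso; lia].
move=> H; apply/(gadj _ _ ha hb); move: H.
by case: ifP => [/eqP h1|/negbT h1]; case: ifP => [/eqP h2|/negbT h2]; case/orP => /eqP H; lia.
Qed.

(* Twin-freeness of the pattern [h] makes [f] injective. *)
Lemma induced_copy_of_twin_free (k : nat) (h : rel 'I_k) (f : 'I_k -> T) :
  (forall a b, a <> b -> exists z, h a z <> h b z) ->
  (forall a b, e (f a) (f b) = h a b) -> induced_copy e h.
Proof.
move=> twin_free fe; exists f; split=> // a b fab; apply: contrapT => nab.
by have [z] := twin_free a b nab; rewrite -!fe fab.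
Qed.

End InducedCopies.

Lemma X2_twin_free (a b : 'I_7) : a <> b -> exists z, X2 a z <> X2 b z.
Proof.
move: a b => [[|[|[|[|[|[|[|//]]]]]]] ha] [[|[|[|[|[|[|[|//]]]]]]] hb] hab.
all: try (exfalso; apply: hab; congr Ordinal; apply: bool_irrelevance).
all: first [ by exists (@Ordinal 7 0 isT) | by exists (@Ordinal 7 1 isT)
  | by exists (@Ordinal 7 2 isT) | by exists (@Ordinal 7 3 isT)
  | by exists (@Ordinal 7 4 isT) | by exists (@Ordinal 7 5 isT)
  | by exists (@Ordinal 7 6 isT)].
Qed.

Lemma C6_twin_free (a b : 'I_6) : a <> b -> exists z, cycle_rel a z <> cycle_rel b z.
Proof.
move: a b => [[|[|[|[|[|[|//]]]]]] ha] [[|[|[|[|[|[|//]]]]]] hb] hab.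
all: try (exfalso; apply: hab; congr Ordinal; apply: bool_irrelevance).
all: first [ by exists (@Ordinal 6 0 isT) | by exists (@Ordinal 6 1 isT)
  | by exists (@Ordinal 6 2 isT) | by exists (@Ordinal 6 3 isT)
  | by exists (@Ordinal 6 4 isT) | by exists (@Ordinal 6 5 isT)].
Qed.

Section Hole.
Variable T : finType.
Variable e : rel T.
Hypothesis e_sym : forall x y, e x y = e y x.
Hypothesis e_irr : forall x, e x x = false.
Variable m : nat.
Variable c : int -> T.
Hypothesis hole : is_hole_enum e m c.

Lemma hole_length_ge5 : (5 <= m)%N. Proof. by case: hole. Qed.

Lemma hole_period (k z : int) : c (k + z * m%:Z) = c k.
Proof.
case: hole => _ [per _].
have per_k l : c (l + m%:Z) = c k <-> c l = c k by rewrite per.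
exact/(int_periodic per_k).
Qed.

Lemma hole_eqE (r s : int) : c r = c s <-> ((r - s) %% m%:Z)%Z = 0.
Proof.
case: hole => _ [_ [inj _]]; split; first exact: inj.
move=> h; rewrite -(hole_period s ((r - s) %/ m%:Z)%Z); congr c.
by have := divz_eq (r - s) m%:Z; rewrite h addr0 => <-; lia.
Qed.

Lemma hole_eq_small (r s : int) : - m%:Z < r - s < m%:Z -> (c r = c s <-> r = s).
Proof.
by move=> b; rewrite hole_eqE modz_sym_small //; case: ifP => [h|/negbT h]; split; lia.
Qed.

Lemma hole_eq_window (r s : int) : - (2 * m%:Z) < r - s < 2 * m%:Z ->
  (c r = c s <-> (r - s = 0 \/ r - s = m%:Z \/ r - s = - m%:Z)).
Proof.
move=> b; case: (lerP (r - s) (- m%:Z)) => h1.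
  rewrite -(hole_period r 1) mul1r hole_eq_small; last by lia.
  by split; lia.
case: (ltrP (r - s) m%:Z) => h2; first by rewrite hole_eq_small; [split; lia | lia].
rewrite -(hole_period r (-1)) hole_eq_small; last by lia.
by split; lia.
Qed.

Lemma hole_shift (a b t : int) : c a = c b -> c (a + t) = c (b + t).
Proof. by move=> /hole_eqE h; apply/hole_eqE; rewrite -h; congr (_ %% _)%Z; lia. Qed.

Lemma hole_adj_small (r s : int) : - m%:Z < r - s < m%:Z ->
  e (c r) (c s) <-> (r - s = 1 \/ s - r = 1 \/ r - s = m%:Z - 1 \/ s - r = m%:Z - 1).
Proof.
case: hole => _ [_ [_ adj]] b; have b' : - m%:Z < s - r < m%:Z by lia.
have hm := hole_length_ge5.
rewrite adj (modz_sym_small b) (modz_sym_small b'); split.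
  by case/orP; case: ifP => [h|/negbT h] /eqP; lia.
move=> h; apply/orP; case: ifP => [h1|/negbT h1]; case: ifP => [h2|/negbT h2];
  case: h => [h|[h|[h|h]]]; solve [left; apply/eqP; lia | right; apply/eqP; lia | exfalso; lia].
Qed.

Lemma hole_adjE (a b : int) : e (c a) (c b) <-> (c b = c (a + 1) \/ c b = c (a - 1)).
Proof.
case: hole => _ [_ [_ adj]]; have hm := hole_length_ge5.
have mod1 d : ((d %% m%:Z)%Z == 1) = (((d - 1) %% m%:Z)%Z == 0).
  rewrite -modzDml (@modz_sym_small ((d %% m%:Z)%Z - 1)); last first.
    have := modz_ge0 d (_ : m%:Z != 0); have := ltz_pmod d (_ : 0 < m%:Z); lia.
  by case: ifP => h; apply/eqP/eqP; lia.
have flip (u v : T) : u = v <-> v = u by split.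
rewrite [c b = c (a - 1)]flip adj !mod1 !hole_eqE; split.
  by case/orP=> /eqP h; [right|left]; rewrite -h; congr (_ %% _)%Z; lia.
by case=> h; apply/orP; [right|left]; apply/eqP; rewrite -h; congr (_ %% _)%Z; lia.
Qed.

Lemma hole_length_ge10 :
  (forall k : nat, (5 <= k <= 9)%N -> ~ induced_copy e (@cycle_rel k)) -> (10 <= m)%N.
Proof.
move=> no_small; case: (leqP 10 m) => // hm; exfalso; have h5 := hole_length_ge5.
apply: (no_small m); first by lia.
apply: (induced_cycle_of_nat (g := fun a => c a%:Z)); first by lia.
  by move=> a b ha hb /hole_eq_small; lia.
by move=> a b ha hb; rewrite hole_adj_small; [split; lia | lia].
Qed.

Section Arc.
Variables (x y : T) (p : int) (L : nat).
Hypothesis hL : (L + 2 < m)%N.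
Hypothesis exy : e x y.
Hypothesis nxy : x <> y.
Hypothesis exp : e x (c p).
Hypothesis eyq : e y (c (p + L%:Z)).
Hypothesis nx : forall r : nat, (0 < r <= L)%N -> ~ e x (c (p + r%:Z)).
Hypothesis ny : forall r : nat, (r < L)%N -> ~ e y (c (p + r%:Z)).
Hypothesis dx : forall r : nat, (r <= L)%N -> x <> c (p + r%:Z).
Hypothesis dy : forall r : nat, (r <= L)%N -> y <> c (p + r%:Z).

Definition arc_vertex (a : nat) : T :=
  if a == 0%N then x else if a == (L + 2)%N then y else c (p + (a - 1)%N%:Z).

Lemma arc_vertexP a : (a < L + 3)%N ->
  [\/ a = 0%N /\ arc_vertex a = x, a = (L + 2)%N /\ arc_vertex a = y |
      (0 < a < L + 2)%N /\ arc_vertex a = c (p + (a - 1)%N%:Z)].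
Proof.
move=> ha; rewrite /arc_vertex; case: eqP => [->|h0]; first by constructor 1.
by case: eqP => [->|h1]; [constructor 2 | constructor 3; split=> //; lia].
Qed.

Lemma arc_induced_cycle : induced_copy e (@cycle_rel (L + 3)).
Proof.
have hm := hole_length_ge5.
have ey (r : nat) : (r <= L)%N -> e y (c (p + r%:Z)) <-> r = L.
  move=> hr; split=> [h|->] //; case: (ltngtP r L) => // hr'; [by case: (ny hr') | lia].
have ex (r : nat) : (r <= L)%N -> e x (c (p + r%:Z)) <-> r = 0%N.
  move=> hr; split=> [h|->]; last by rewrite addr0.
  by case: (posnP r) => // hr'; case: (nx (r := r)) => //; lia.
apply: (induced_cycle_of_nat (g := arc_vertex)); first by lia.
  move=> a b ha hb; case: (arc_vertexP ha) => [[a0 ->]|[a0 ->]|[a0 ->]];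
  case: (arc_vertexP hb) => [[b0 ->]|[b0 ->]|[b0 ->]] h.
  - lia.
  - by case: nxy.
  - by case: (dx (r := (b - 1)%N)) => //; lia.
  - by case: nxy.
  - lia.
  - by case: (dy (r := (b - 1)%N)) => //; lia.
  - by case: (dx (r := (a - 1)%N)) => //; lia.
  - by case: (dy (r := (a - 1)%N)) => //; lia.
  - by move/hole_eq_small: h; lia.
move=> a b ha hb; case: (arc_vertexP ha) => [[a0 ->]|[a0 ->]|[a0 ->]];
  case: (arc_vertexP hb) => [[b0 ->]|[b0 ->]|[b0 ->]].
- by rewrite e_irr; split=> //; lia.
- by split=> // _; lia.
- by rewrite ex; [split; lia | lia].
- by rewrite e_sym; split=> // _; lia.
- by rewrite e_irr; split=> //; lia.
- by rewrite ey; [split; lia | lia].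
- by rewrite e_sym ex; [split; lia | lia].
- by rewrite e_sym ey; [split; lia | lia].
- by rewrite hole_adj_small; [split; lia | lia].
Qed.

End Arc.

Lemma hole_in_A (k : int) : Aset e c k (c k).
Proof.
move=> z; split; first by case=> [[r ->]] /hole_adjE [->|->]; [right|left].
by case=> ->; (split; first by eexists); apply/hole_adjE; [right|left]; congr c; lia.
Qed.

Lemma Aset_adj_hole (k r : int) v : Aset e c k v ->
  (e v (c r) <-> (c r = c (k - 1) \/ c r = c (k + 1))).
Proof. by move=> A; split=> [h|/A []] //; apply/A; split=> //; exists r. Qed.

Lemma Bset_adj_hole (k r : int) v : Bset e c k v -> (e v (c r) <-> c r = c k).
Proof. by move=> B; split=> [h|/B []] //; apply/B; split=> //; exists r. Qed.

Lemma Aset_uniq (k l : int) v : Aset e c k v -> Aset e c l v -> c k = c l.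
Proof.
move=> Ak Al; have hm := hole_length_ge5.
have /(Aset_adj_hole _ Al) [h1|h1] : e v (c (k + 1)) by apply/(Aset_adj_hole _ Ak); right.
  exfalso; have /(Aset_adj_hole _ Al) h2 : e v (c (k - 1)) by apply/(Aset_adj_hole _ Ak); left.
  have := hole_shift (-2) h1; rewrite (_ : k + 1 + -2 = k - 1); last by lia.
  by case: h2 => -> /hole_eq_small; lia.
by have := hole_shift (-1) h1; rewrite !addrK.
Qed.

Lemma Bset_uniq (k l : int) v : Bset e c k v -> Bset e c l v -> c k = c l.
Proof.
by move=> Bk Bl; have /(Bset_adj_hole _ Bl) : e v (c k) by apply/(Bset_adj_hole _ Bk).
Qed.

Lemma Aset_Bset_disj (k l : int) v : Aset e c k v -> Bset e c l v -> False.
Proof.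
move=> Ak Bl; have hm := hole_length_ge5.
have /(Bset_adj_hole _ Bl) h1 : e v (c (k + 1)) by apply/(Aset_adj_hole _ Ak); right.
have /(Bset_adj_hole _ Bl) h2 : e v (c (k - 1)) by apply/(Aset_adj_hole _ Ak); left.
by move: h1; rewrite -h2 => /hole_eq_small; lia.
Qed.

Lemma Aset_hole_vertex (k r : int) v : Aset e c k v -> v = c r -> c r = c k.
Proof. by move=> Av vr; apply: Aset_uniq (hole_in_A r) _; rewrite -vr. Qed.

Lemma Bset_not_hole (k r : int) v : Bset e c k v -> v <> c r.
Proof. by move=> Bv vr; apply: Aset_Bset_disj (hole_in_A r) _; rewrite -vr. Qed.

Lemma Aset_adj_window (k r : int) v : Aset e c k v ->
  - (2 * m%:Z) + 2 < r - k < 2 * m%:Z - 2 ->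
  (e v (c r) <-> (r = k - 1 \/ r = k + 1 \/ r = k - 1 + m%:Z \/ r = k - 1 - m%:Z \/
                   r = k + 1 + m%:Z \/ r = k + 1 - m%:Z)).
Proof. by move=> A b; rewrite (Aset_adj_hole _ A) !hole_eq_window; lia. Qed.

Lemma Bset_adj_window (k r : int) v : Bset e c k v -> - (2 * m%:Z) < r - k < 2 * m%:Z ->
  (e v (c r) <-> (r = k \/ r = k + m%:Z \/ r = k - m%:Z)).
Proof. by move=> B b; rewrite (Bset_adj_hole _ B) !hole_eq_window; lia. Qed.

Lemma Aset_hole_vertex_window (k r : int) v : Aset e c k v -> - (2 * m%:Z) < r - k < 2 * m%:Z ->
  v = c r -> (r = k \/ r = k + m%:Z \/ r = k - m%:Z).
Proof. by move=> A b /(Aset_hole_vertex A) /hole_eq_window; lia. Qed.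

Hypothesis no_triangle : ~ induced_copy e (@cycle_rel 3).
Hypothesis no_shorter_hole : forall k : nat, (5 <= k < m)%N -> ~ induced_copy e (@cycle_rel k).
Hypothesis m_ge10 : (10 <= m)%N.

(* With the edge [x y], the arc [c p, ..., c (p + L)] closes into an induced cycle of length
   [L + 3]: a triangle or a hole shorter than [m]. *)
Lemma no_chordless_arc (x y : T) (p : int) (L : nat) :
  (L = 0 \/ (2 <= L /\ L + 3 < m))%N ->
  e x y -> x <> y -> e x (c p) -> e y (c (p + L%:Z)) ->
  (forall r : nat, (0 < r <= L)%N -> ~ e x (c (p + r%:Z))) ->
  (forall r : nat, (r < L)%N -> ~ e y (c (p + r%:Z))) ->
  (forall r : nat, (r <= L)%N -> x <> c (p + r%:Z)) ->
  (forall r : nat, (r <= L)%N -> y <> c (p + r%:Z)) -> False.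
Proof.
move=> hL exy nxy exp eyq nx ny dx dy.
have hL2 : (L + 2 < m)%N by lia.
have := arc_induced_cycle hL2 exy nxy exp eyq nx ny dx dy.
case: hL => [-> //|hL]; apply: no_shorter_hole; lia.
Qed.

(* Adjacency and equality between hole vertices and the members of A- and B-sets in the
   context, decided by index arithmetic. *)
Ltac hole_adj :=
  match goal with
  | |- is_true (e (c _) (c _)) => apply: (proj2 (hole_adj_small _)); lia
  | H : Aset e c _ ?v |- is_true (e ?v (c _)) => apply: (proj2 (Aset_adj_window H _)); lia
  | H : Bset e c _ ?v |- is_true (e ?v (c _)) => apply: (proj2 (Bset_adj_window H _)); lia
  | H : is_true (e ?u ?v) |- is_true (e ?u ?v) => exact: H
  | H : is_true (e ?u ?v) |- is_true (e ?v ?u) => by rewrite e_sym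
  | |- is_true (e (c _) _) => rewrite e_sym; hole_adj
  end.

Ltac hole_nonadj :=
  let h := fresh in
  match goal with
  | |- ~ is_true (e (c _) (c _)) =>
      move=> h; have := fun b => proj1 (hole_adj_small b) h; lia
  | H : Aset e c _ ?v |- ~ is_true (e ?v (c _)) =>
      move=> h; have := fun b => proj1 (Aset_adj_window H b) h; lia
  | H : Bset e c _ ?v |- ~ is_true (e ?v (c _)) =>
      move=> h; have := fun b => proj1 (Bset_adj_window H b) h; lia
  | H : ~ is_true (e ?u ?v) |- ~ is_true (e ?u ?v) => exact: H
  | H : ~ is_true (e ?u ?v) |- ~ is_true (e ?v ?u) => by rewrite e_sym
  | |- ~ is_true (e (c _) _) => rewrite e_sym; hole_nonadj
  end.

Ltac hole_neq :=
  let h := fresh in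
  match goal with
  | H : Bset e c _ ?v |- ?v <> c _ => move=> h; exact: Bset_not_hole H h
  | H : Aset e c _ ?v |- ?v <> c _ =>
      move=> h; have := fun b => Aset_hole_vertex_window H b h; lia
  end.

Ltac chordless_arc exy nxy p L :=
  apply: (no_chordless_arc (p := p) (L := L) _ exy nxy);
  [ lia | hole_adj | hole_adj | move=> ? ?; hole_nonadj | move=> ? ?; hole_nonadj
  | move=> ? ?; hole_neq | move=> ? ?; hole_neq ].

Lemma AA_edge_dist (k : int) (d : nat) x y : (d <= m - 3)%N ->
  Aset e c k x -> Aset e c (k + d%:Z) y -> e x y -> d = 1%N.
Proof.
move=> hd Ax Ay exy; have nxy : x <> y by move=> exy'; rewrite exy' e_irr in exy.
have eyx : e y x by rewrite e_sym.
have nyx : y <> x by move/esym.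
case: (ltngtP d 1) => // hd1; exfalso.
  by chordless_arc exy nxy (k + 1) 0%N.
case: (ltngtP d 3) => hd3.
- by chordless_arc exy nxy (k + 1) 0%N.
- by chordless_arc exy nxy (k + 1) (d - 2)%N.
- by chordless_arc eyx nyx (k + 4 - m%:Z) (m - 5)%N.
Qed.

Lemma AB_edge_dist (k : int) (d : nat) x y : (d <= m - 3)%N ->
  Aset e c k x -> Bset e c (k + d%:Z) y -> e x y -> (d = 0 \/ d = 2)%N.
Proof.
move=> hd Ax By exy; have nxy : x <> y by move=> exy'; rewrite exy' e_irr in exy.
case: (ltngtP d 2) => hd2; [|exfalso|by right].
  case: (ltngtP d 1) => hd1; [left; lia | lia | exfalso].
  by chordless_arc exy nxy (k + 1) 0%N.
by chordless_arc exy nxy (k + 1) (d - 1)%N.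
Qed.

Lemma BA_edge_dist (k : int) (d : nat) x y : (d <= m - 3)%N ->
  Bset e c k x -> Aset e c (k + d%:Z) y -> e x y -> (d = 0 \/ d = 2)%N.
Proof.
move=> hd Bx Ay exy; have nxy : x <> y by move=> exy'; rewrite exy' e_irr in exy.
case: (ltngtP d 2) => hd2; [|exfalso|by right].
  case: (ltngtP d 1) => hd1; [left; lia | lia | exfalso].
  by chordless_arc exy nxy k 0%N.
by chordless_arc exy nxy k (d - 1)%N.
Qed.

Lemma BB_edge_dist (k : int) (d : nat) x y : (d <= m - 3)%N ->
  Bset e c k x -> Bset e c (k + d%:Z) y -> e x y -> d = 1%N.
Proof.
move=> hd Bx By exy; have nxy : x <> y by move=> exy'; rewrite exy' e_irr in exy.
have eyx : e y x by rewrite e_sym.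
have nyx : y <> x by move/esym.
case: (ltngtP d 1) => // hd1; exfalso.
  by chordless_arc exy nxy k 0%N.
case: (ltngtP d (m - 3)) => hd3.
- by chordless_arc exy nxy k d.
- lia.
- by chordless_arc eyx nyx (k - 3) 3%N.
Qed.

Ltac hole_edge :=
  match goal with
  | |- _ = false => first [by rewrite e_irr | apply/negbTE/negP; hole_nonadj]
  | |- ?b = true => change (is_true b); hole_adj
  end.

Ltac compute_pattern :=
  match goal with |- _ = ?rhs => let v := eval vm_compute in rhs in change rhs with v end.

Ltac pattern7_edges :=
  move=> [[|[|[|[|[|[|[|//]]]]]]] ?] [[|[|[|[|[|[|[|//]]]]]]] ?] /=; compute_pattern; hole_edge.

Ltac pattern6_edges :=
  move=> [[|[|[|[|[|[|//]]]]]] ?] [[|[|[|[|[|[|//]]]]]] ?] /=; compute_pattern; hole_edge.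

Hypothesis no_X2 : ~ induced_copy e X2.

Lemma Aset_Bset_adj (k : int) a b : Aset e c k a -> Bset e c k b -> e a b.
Proof.
(* Otherwise c (k - 1), c k, c (k + 1), a is a 4-cycle with pendants c (k - 2), b, c (k + 2). *)
move=> Aa Bb; apply: contrapT => nab; apply: no_X2.
apply: (induced_copy_of_twin_free X2_twin_free (f := fun z : 'I_7 =>
   nth a [:: c (k - 1); c k; c (k + 1); a; c (k - 2); b; c (k + 2)] z)).
pattern7_edges.
Qed.

Lemma AB_next_nonadj (k : int) x y : Aset e c k x -> Bset e c (k + 1) y -> ~ e x y.
Proof. by move=> Ax By /(AB_edge_dist (d := 1) _ Ax By); lia. Qed.

Lemma BA_next_nonadj (k : int) x y : Bset e c k x -> Aset e c (k + 1) y -> ~ e x y.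
Proof. by move=> Bx Ay /(BA_edge_dist (d := 1) _ Bx Ay); lia. Qed.

Lemma A_skip_down (k : int) x b a : Aset e c (k + 2) x -> Bset e c k b -> e x b ->
  Aset e c (k + 1) a -> e x a.
Proof.
move=> Ax Bb exb Aa; apply: contrapT => nxa; have nba := BA_next_nonadj Bb Aa.
apply: (no_shorter_hole (k := 6)); first by lia.
apply: (induced_copy_of_twin_free C6_twin_free (f := fun z : 'I_6 =>
   nth x [:: x; b; c k; a; c (k + 2); c (k + 3)] z)).
pattern6_edges.
Qed.

Lemma A_skip_up (k : int) x b a : Aset e c k x -> Bset e c (k + 2) b -> e x b ->
  Aset e c (k + 1) a -> e x a.
Proof.
move=> Ax Bb exb Aa; apply: contrapT => nxa.
have nab : ~ e a b by apply: AB_next_nonadj Aa _; rewrite (_ : k + 1 + 1 = k + 2) //; lia.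
apply: (no_shorter_hole (k := 6)); first by lia.
apply: (induced_copy_of_twin_free C6_twin_free (f := fun z : 'I_6 =>
   nth x [:: x; b; c (k + 2); a; c k; c (k - 1)] z)).
pattern6_edges.
Qed.

Lemma B_skip_down (k : int) u a b : Bset e c (k + 2) u -> Aset e c k a -> e u a ->
  Bset e c (k + 1) b -> e u b.
Proof.
move=> Bu Aa eua Bb; apply: contrapT => nub; have nab := AB_next_nonadj Aa Bb.
apply: no_X2.
apply: (induced_copy_of_twin_free X2_twin_free (f := fun z : 'I_7 =>
   nth u [:: a; c (k + 1); c (k + 2); u; c (k - 1); b; c (k + 3)] z)).
pattern7_edges.
Qed.

Lemma B_skip_up (k : int) u a b : Bset e c k u -> Aset e c (k + 2) a -> e u a ->
  Bset e c (k + 1) b -> e u b.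
Proof.
move=> Bu Aa eua Bb; apply: contrapT => nub.
have nba : ~ e b a by apply: BA_next_nonadj Bb _; rewrite (_ : k + 1 + 1 = k + 2) //; lia.
apply: no_X2.
apply: (induced_copy_of_twin_free X2_twin_free (f := fun z : 'I_7 =>
   nth u [:: a; c (k + 1); c k; u; c (k + 3); b; c (k - 1)] z)).
pattern7_edges.
Qed.

(** * The levels of A[i,j] and B[i,j] *)

Variables i j : int.
Hypothesis ji : j - i = m%:Z - 3.

(* [part false] is A[i,j] and [part true] is B[i,j]; level [n] of [part b] is [block b n],
   a B-set exactly when [Bblock b n]. *)
Definition Bblock (b : bool) (n : nat) : bool := odd n (+) b.
Definition block (b : bool) (n : nat) (v : T) : Prop :=
  if Bblock b n then Bset e c (i + n%:Z) v else Aset e c (i + n%:Z) v.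
Definition part (b : bool) (v : T) : Prop := exists2 n, (n <= m - 3)%N & block b n v.

Lemma Bblock_neg b n : Bblock (~~ b) n = ~~ Bblock b n.
Proof. by rewrite /Bblock addbN. Qed.
Lemma Bblock_add1 b n : Bblock b (n + 1) = ~~ Bblock b n.
Proof. by rewrite /Bblock oddD /= addbT addNb. Qed.
Lemma Bblock_add2 b n : Bblock b (n + 2) = Bblock b n.
Proof. by rewrite /Bblock oddD /= addbF. Qed.

Lemma Abig_part v : Abig e c i j v <-> part false v.
Proof.
rewrite /part /block /Bblock; split=> [[n [hn H]]|[n hn H]]; exists n; rewrite ?addbF //.
- lia.
- by split; [lia | rewrite addbF in H].
Qed.

Lemma Bbig_part v : Bbig e c i j v <-> part true v.
Proof.
rewrite /part /block /Bblock; split=> [[n [hn H]]|[n hn H]]; exists n; rewrite ?addbT.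
- lia.
- by case: (odd n) H.
- by split; [lia | case: (odd n) H].
Qed.

Lemma block_uniq b b' n n' v : (n <= m - 3)%N -> (n' <= m - 3)%N ->
  block b n v -> block b' n' v -> n = n' /\ b = b'.
Proof.
move=> hn hn'; rewrite /block.
have idx_inj : c (i + n%:Z) = c (i + n'%:Z) -> n = n' by move/hole_eq_small; lia.
have Bblock_inj : n = n' -> Bblock b n = Bblock b' n' -> b = b'.
  by move=> <-; apply: addbI.
case Eb: (Bblock b n); case Eb': (Bblock b' n') => H H'.
- by have E := idx_inj (Bset_uniq H H'); split=> //; apply: Bblock_inj; rewrite ?Eb ?Eb'.
- by case: (Aset_Bset_disj H' H).
- by case: (Aset_Bset_disj H H').
- by have E := idx_inj (Aset_uniq H H'); split=> //; apply: Bblock_inj; rewrite ?Eb ?Eb'.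
Qed.

Lemma part_disj v : ~ (part false v /\ part true v).
Proof. by case=> [[n hn H] [n' hn' H']]; have [] := block_uniq hn hn' H H'. Qed.

(* Outside A[i,j] and B[i,j] the value of [level] is irrelevant. *)
Definition level (v : T) : nat :=
  if pselect (exists n, (n <= m - 3)%N /\ (block false n v \/ block true n v)) is left h
  then proj1_sig (cid h) else 0.

Lemma levelE b n v : (n <= m - 3)%N -> block b n v -> level v = n.
Proof.
move=> hn H; rewrite /level; case: pselect => [h|[]]; last first.
  by exists n; split=> //; case: b H; [right|left].
by case: (cid h) => n' /= [hn' [H'|H']]; have [] := block_uniq hn' hn H' H.
Qed.

Lemma part_level b v : part b v -> (level v <= m - 3)%N /\ block b (level v) v.
Proof. by case=> n hn H; rewrite (levelE hn H). Qed.

Lemma Bblock_flip b b' n n' : (n <= n')%N ->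
  Bblock b' n' = ~~ (Bblock b n (+) odd (n' - n)) -> b' = ~~ b.
Proof.
move=> le; rewrite /Bblock -{1}(subnKC le) oddD.
by case: b; case: b'; case: (odd n); case: (odd (n' - n)).
Qed.

Lemma block_edge b b' n n' x y : (n <= m - 3)%N -> (n' <= m - 3)%N ->
  block b n x -> block b' n' y -> e x y -> b' = ~~ b /\ (n' <= n + 2)%N /\ (n <= n' + 2)%N.
Proof.
wlog le : b b' n n' x y / (n <= n')%N.
  move=> W hn hn' Bx By exy; case: (leqP n n') => h; first exact: (W b b' n n' x y).
  rewrite e_sym in exy; have [E bounds] := W b' b n' n y x (ltnW h) hn' hn By Bx exy.
  by split; [rewrite E negbK | lia].
move=> hn hn' Bx By exy.
have [d En'] : exists d, n' = (n + d)%N by exists (n' - n)%N; lia.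
subst n'; have hd : (d <= m - 3)%N by lia.
have [] : ((d = 1 \/ d = 0 \/ d = 2) /\ Bblock b' (n + d) = ~~ (Bblock b n (+) odd d))%N.
  move: Bx By; rewrite /block PoszD addrA.
  case: (Bblock b n); case: (Bblock b' (n + d)) => Hx Hy.
  - by have -> := BB_edge_dist hd Hx Hy exy; split; [left|].
  - by have [->|->] := BA_edge_dist hd Hx Hy exy; split=> //; right; [left|right].
  - by have [->|->] := AB_edge_dist hd Hx Hy exy; split=> //; right; [left|right].
  - by have -> := AA_edge_dist hd Hx Hy exy; split; [left|].
move=> hd' flip; split; last by lia.
by apply: Bblock_flip (leq_addr d n) _; rewrite addKn.
Qed.

Variables ltA ltB : int -> T -> T -> Prop.
Hypothesis lin_ext : linear_extensions e c m ltA ltB.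

Definition block_lt (b : bool) (n : nat) : T -> T -> Prop :=
  if Bblock b n then ltB (i + n%:Z) else ltA (i + n%:Z).
Definition block_pre (b : bool) (n : nat) : T -> T -> Prop :=
  if Bblock b n then preB e c (i + n%:Z) else preA e c (i + n%:Z).

Lemma block_linear b n : strict_linear_on (block b n) (block_lt b n).
Proof.
case: lin_ext => _ [_ [linA linB]].
by rewrite /block /block_lt; case: (Bblock b n); [case: (linB (i + n%:Z)) | case: (linA (i + n%:Z))].
Qed.

Lemma block_lt_of_pre b n u v :
  block b n u -> block b n v -> block_pre b n u v -> block_lt b n u v.
Proof.
case: lin_ext => _ [_ [linA linB]].
rewrite /block /block_lt /block_pre; case: (Bblock b n).
- by case: (linB (i + n%:Z)) => _; apply.
- by case: (linA (i + n%:Z)) => _; apply.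
Qed.

Lemma block_pre_of_lower b n d v u u' : (d = 1 \/ d = 2)%N ->
  block (~~ b) n v -> e v u -> ~ e v u' -> block_pre b (n + d) u u'.
Proof.
move=> d12 Bv evu nevu'; rewrite /block_pre; rewrite /block Bblock_neg in Bv.
case: d12 => ->; rewrite ?Bblock_add1 ?Bblock_add2 PoszD addrA;
  case: (Bblock b n) Bv => /= Bv; left; exists v; (split; last by []).
- by right; rewrite addrK.
- by right; rewrite addrK.
- by left; rewrite addrK.
- by left; rewrite addrK.
Qed.

Lemma block_pre_of_upper b n d v u u' : (d = 1 \/ d = 2)%N ->
  block (~~ b) (n + d) v -> e v u' -> ~ e v u -> block_pre b n u u'.
Proof.
move=> d12 Bv evu' nevu; rewrite /block_pre; rewrite /block Bblock_neg in Bv.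
case: d12 => E; rewrite E ?Bblock_add1 ?Bblock_add2 PoszD addrA in Bv;
  case: (Bblock b n) Bv => /= Bv; right; exists v; (split; last by []).
- by left.
- by left.
- by right.
- by right.
Qed.

Definition part_lt (b : bool) (x y : T) : Prop :=
  part b x /\ part b y /\
  ((level x < level y)%N \/ (level x = level y /\ block_lt b (level x) x y)).

Lemma part_lt_linear b : strict_linear_on (part b) (part_lt b).
Proof.
split.
  move=> x Px [_ [_ [|[_]]]]; first by rewrite ltnn.
  by have [_ Bx] := part_level Px; case: (block_linear b (level x)) => irr _; apply: irr.
split.
  move=> x y z Px Py Pz [_ [_ lxy]] [_ [_ lyz]]; do 2!split=> //.
  case: lxy lyz => [lxy|[exy lxy]] [lyz|[eyz lyz]]; try by left; lia.
  right; split; first by rewrite exy eyz.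
  have [_ Bx] := part_level Px; have [_ By] := part_level Py; have [_ Bz] := part_level Pz.
  rewrite -exy in By lyz; rewrite -eyz -exy in Bz.
  by case: (block_linear b (level x)) => _ [tr _]; apply: (tr x y z).
move=> x y Px Py nxy.
case: (ltngtP (level x) (level y)) => h.
- by left; do 2!split=> //; left.
- by right; do 2!split=> //; left.
- have [_ Bx] := part_level Px; have [_ By] := part_level Py; rewrite -h in By.
  case: (block_linear b (level x)) => _ [_ tot]; case: (tot x y Bx By nxy) => l.
  + by left; do 2!split=> //; right.
  + by right; do 2!split=> //; right; rewrite -h.
Qed.

Lemma part_lt_mono b y y' : part_lt b y y' -> part b y /\ part b y' /\ (level y <= level y')%N.
Proof. by case=> Py [Py' h]; do 2!split=> //; case: h => [|[->]] //; lia. Qed.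

Lemma hole_in_block b' n : Bblock b' n = false -> block b' n (c (i + n%:Z)).
Proof. by rewrite /block => ->; apply: hole_in_A. Qed.

Section OneSide.
Variable b : bool.

Lemma part_indep x x' : part b x -> part b x' -> ~ e x x'.
Proof.
move=> Px Px' exx'; have [hx Bx] := part_level Px; have [hx' Bx'] := part_level Px'.
by have [] := block_edge hx hx' Bx Bx' exx'; case: b.
Qed.

Lemma part_near x y : part b x -> part (~~ b) y -> e x y ->
  (level y <= level x + 2)%N /\ (level x <= level y + 2)%N.
Proof.
move=> Px Py exy; have [hx Bx] := part_level Px; have [hy By] := part_level Py.
by have [] := block_edge hx hy Bx By exy.
Qed.

Lemma part_same_level_adj x y : part b x -> part (~~ b) y -> level x = level y -> e x y.
Proof.
move=> Px Py Exy; have [_ Bx] := part_level Px; have [_ By] := part_level Py.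
move: Bx By; rewrite /block -Exy Bblock_neg; case: (Bblock b (level x)) => /= Bx By.
- by rewrite e_sym; apply: Aset_Bset_adj By Bx.
- exact: Aset_Bset_adj Bx By.
Qed.

Lemma part_upper_prefix v z z' : part b v -> part (~~ b) z -> part (~~ b) z' ->
  level z = level z' -> part_lt (~~ b) z z' -> (level v < level z)%N -> e v z' -> e v z.
Proof.
move=> Pv Pz Pz' Ezz' [_ [_ [lt|[_ lt]]]] lvz evz'; first by rewrite Ezz' ltnn in lt.
have [_ Bv] := part_level Pv; have [_ Bz] := part_level Pz; have [_ Bz'] := part_level Pz'.
rewrite -Ezz' in Bz'.
have [near _] := part_near Pv Pz' evz'.
apply: contrapT => nvz.
have [d d12 Ed] : exists2 d, (d = 1 \/ d = 2)%N & level z = (level v + d)%N.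
  by exists (level z - level v)%N; lia.
apply: (strict_linear_asym (block_linear _ _) Bz Bz' lt).
apply: block_lt_of_pre => //; rewrite Ed; apply: block_pre_of_lower d12 _ evz' nvz.
by rewrite negbK.
Qed.

Lemma part_lower_suffix v z z' : part b v -> part (~~ b) z -> part (~~ b) z' ->
  level z = level z' -> part_lt (~~ b) z z' -> (level z < level v)%N -> e v z -> e v z'.
Proof.
move=> Pv Pz Pz' Ezz' [_ [_ [lt|[_ lt]]]] lzv evz; first by rewrite Ezz' ltnn in lt.
have [_ Bv] := part_level Pv; have [_ Bz] := part_level Pz; have [_ Bz'] := part_level Pz'.
rewrite -Ezz' in Bz'.
have [_ near] := part_near Pv Pz evz.
apply: contrapT => nvz'.
have [d d12 Ed] : exists2 d, (d = 1 \/ d = 2)%N & level v = (level z + d)%N.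
  by exists (level v - level z)%N; lia.
apply: (strict_linear_asym (block_linear _ _) Bz Bz' lt).
apply: block_lt_of_pre => //; apply: block_pre_of_upper d12 _ evz nvz'.
by rewrite negbK -Ed.
Qed.

Lemma part_skip_up v z z' : part b v -> part (~~ b) z -> part (~~ b) z' -> e v z ->
  level z = (level v + 2)%N -> level z' = (level v + 1)%N -> e v z'.
Proof.
move=> Pv Pz Pz' evz Ez Ez'.
have [_ Bv] := part_level Pv; have [_ Bz] := part_level Pz; have [_ Bz'] := part_level Pz'.
move: Bv Bz Bz'; rewrite /block Ez Ez' !Bblock_neg Bblock_add1 Bblock_add2 !PoszD !addrA.
case: (Bblock b (level v)) => /= Bv Bz Bz'.
- exact: B_skip_up Bv Bz evz Bz'.
- exact: A_skip_up Bv Bz evz Bz'.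
Qed.

Lemma part_skip_down v z z' : part b v -> part (~~ b) z -> part (~~ b) z' -> e v z ->
  level v = (level z + 2)%N -> level v = (level z' + 1)%N -> e v z'.
Proof.
move=> Pv Pz Pz' evz Ev Evz'; have Ez' : level z' = (level z + 1)%N by lia.
have [_ Bv] := part_level Pv; have [_ Bz] := part_level Pz; have [_ Bz'] := part_level Pz'.
move: Bv Bz Bz'; rewrite /block Ev Ez' !Bblock_neg Bblock_add1 Bblock_add2 !PoszD !addrA.
case: (Bblock b (level z)) => /= Bv Bz Bz'.
- exact: B_skip_down Bv Bz evz Bz'.
- exact: A_skip_down Bv Bz evz Bz'.
Qed.

Lemma part_has_nbr v : part b v -> exists y, part (~~ b) y /\ e v y.
Proof.
move=> Pv; have [hv Bv] := part_level Pv.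
move: Bv; rewrite /block; case Eb: (Bblock b (level v)) => Bv.
  exists (c (i + (level v)%:Z)); split; last by hole_adj.
  by exists (level v) => //; apply: hole_in_block; rewrite Bblock_neg Eb.
case: (ltnP (level v) (m - 3)) => top.
  exists (c (i + (level v + 1)%N%:Z)); split; last by hole_adj.
  by exists (level v + 1)%N; [lia | apply: hole_in_block; rewrite Bblock_neg Bblock_add1 Eb].
have [s Es] : exists s, level v = (s + 1)%N by exists (level v - 1)%N; lia.
exists (c (i + s%:Z)); split; last by hole_adj.
exists s; first by lia.
by apply: hole_in_block; move: Eb; rewrite Es Bblock_neg Bblock_add1 => /negbFE ->.
Qed.

Lemma part_leveled : leveled_side e level (part b) (part (~~ b)) (part_lt (~~ b)).
Proof.
split.
- exact: part_indep.
- exact: part_near.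
- exact: part_same_level_adj.
- exact: part_upper_prefix.
- exact: part_lower_suffix.
- exact: part_skip_up.
- exact: part_skip_down.
- exact: part_lt_mono.
- exact: part_has_nbr.
- by move=> v [Pv Pv']; apply: (@part_disj v); case: b Pv Pv'.
Qed.

End OneSide.

(** * The orders <_U and <_W *)

Lemma ltA_hole_idx (k l : int) x y : c k = c l -> (ltA k x y <-> ltA l x y).
Proof.
case: lin_ext => perA _ /hole_eqE h.
have -> : k = l + ((k - l) %/ m%:Z)%Z * m%:Z.
  by have := divz_eq (k - l) m%:Z; rewrite h addr0; lia.
exact: (@int_periodic (fun k => ltA k x y) m%:Z (fun k => perA k x y)).
Qed.

Lemma ltB_hole_idx (k l : int) x y : c k = c l -> (ltB k x y <-> ltB l x y).
Proof.
case: lin_ext => _ [perB _] /hole_eqE h.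
have -> : k = l + ((k - l) %/ m%:Z)%Z * m%:Z.
  by have := divz_eq (k - l) m%:Z; rewrite h addr0; lia.
exact: (@int_periodic (fun k => ltB k x y) m%:Z (fun k => perB k x y)).
Qed.

Lemma part_Aset b x k : part b x -> Aset e c k x ->
  Bblock b (level x) = false /\ c k = c (i + (level x)%:Z).
Proof.
move=> Px Ax; have [_] := part_level Px; rewrite /block.
by case: (Bblock b (level x)) => Bx; [case: (Aset_Bset_disj Ax Bx) | split=> //; apply: Aset_uniq Ax Bx].
Qed.

Lemma part_Bset b x k : part b x -> Bset e c k x ->
  Bblock b (level x) = true /\ c k = c (i + (level x)%:Z).
Proof.
move=> Px Bx; have [_] := part_level Px; rewrite /block.
by case: (Bblock b (level x)) => Bx'; [split=> //; apply: Bset_uniq Bx Bx' | case: (Aset_Bset_disj Bx' Bx)].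
Qed.

Lemma level_step b b' x y (d : int) : part b x -> part b' y -> 0 <= d <= 2 ->
  c (i + (level x)%:Z + d) = c (i + (level y)%:Z) -> (level y)%:Z = (level x)%:Z + d.
Proof.
move=> Px Py hd /hole_eq_window.
by have := (part_level Px).1; have := (part_level Py).1; lia.
Qed.

Lemma prec_part_lt b x y : part b x -> part b y -> prec e c ltA ltB x y -> part_lt b x y.
Proof.
move=> Px Py [k H]; do 2!split=> //.
case: H => [[Ax [Ay [lt _]]]|[[Bx [By [lt _]]]|[[[Ax _] [By _]]|[[[Ax _] [_ [Ay _]]]|[[Bx _] [Ay _]]]]]].
- have [Ebx Ex] := part_Aset Px Ax; have [_ Ey] := part_Aset Py Ay.
  have := level_step (d := 0) Px Py isT; rewrite addr0 -Ex Ey => /(_ erefl) Exy.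
  by right; split; [lia | rewrite /block_lt Ebx -(ltA_hole_idx _ _ Ex)].
- have [Ebx Ex] := part_Bset Px Bx; have [_ Ey] := part_Bset Py By.
  have := level_step (d := 0) Px Py isT; rewrite addr0 -Ex Ey => /(_ erefl) Exy.
  by right; split; [lia | rewrite /block_lt Ebx -(ltB_hole_idx _ _ Ex)].
- have [_ Ex] := part_Aset Px Ax; have [_ Ey] := part_Bset Py By.
  by have := level_step (d := 1) Px Py isT; rewrite -(hole_shift 1 Ex) Ey => /(_ erefl); left; lia.
- have [_ Ex] := part_Aset Px Ax; have [_ Ey] := part_Aset Py Ay.
  by have := level_step (d := 2) Px Py isT; rewrite -(hole_shift 2 Ex) Ey => /(_ erefl); left; lia.
- have [_ Ex] := part_Bset Px Bx; have [_ Ey] := part_Aset Py Ay.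
  by have := level_step (d := 1) Px Py isT; rewrite -(hole_shift 1 Ex) Ey => /(_ erefl); left; lia.
Qed.

Lemma ltV_block b n x y : (n <= m - 3)%N -> block b n x -> block b n y ->
  block_lt b n x y -> ltV e c ltA ltB (part b) x y.
Proof.
move=> hn Bx By lt.
apply: clos_trans_monotone (consec_clos_trans (block_linear b n) Bx By lt).
move=> u w consec_uw; have [Bu [Bw _]] := consec_uw; split; first by exists n.
split; first by exists n.
exists (i + n%:Z); move: consec_uw; rewrite /block /block_lt.
by case: (Bblock b n) => ?; [right; left | left].
Qed.

Lemma prec_max_min b p M mn : is_max (block b p) (block_lt b p) M ->
  is_min (block b (p + 1)) (block_lt b (p + 1)) mn -> prec e c ltA ltB M mn.
Proof.
move=> HM Hmn; exists (i + p%:Z); move: HM Hmn.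
rewrite /block /block_lt Bblock_add1 PoszD addrA; case: (Bblock b p) => /= HM Hmn.
- by do 4!right; split.
- by right; right; left; split.
Qed.

Lemma prec_max_skip_min b p M mn : Bblock b p = false -> is_max (block b p) (block_lt b p) M ->
  (forall w, ~ block b (p + 1) w) ->
  is_min (block b (p + 2)) (block_lt b (p + 2)) mn -> prec e c ltA ltB M mn.
Proof.
move=> Eb HM empty Hmn; exists (i + p%:Z); do 3!right; left.
move: HM empty Hmn; rewrite /block /block_lt Bblock_add1 Bblock_add2 Eb !PoszD !addrA /=.
by move=> HM empty Hmn; do 2!split=> //.
Qed.

Lemma part_le_max b p x M : (p <= m - 3)%N -> is_max (block b p) (block_lt b p) M ->
  part b x -> (level x <= p)%N -> x = M \/ part_lt b x M.
Proof.
move=> hp [BM maxM] Px hxp; have PM : part b M by exists p.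
have lM := levelE hp BM.
case: (ltngtP (level x) p) => h; [| lia |].
  by right; do 2!split=> //; left; rewrite lM.
case: (EM (x = M)) => [|nxM]; [by left | right].
have [_ Bx] := part_level Px; rewrite h in Bx.
by do 2!split=> //; right; rewrite lM h; split=> //; apply: maxM.
Qed.

(* The vertex of A[i,j] (or B[i,j]) preceding the minimum of level [n] is the maximum of
   level [n - 1], or of level [n - 2] when level [n - 1] is an empty B-set. *)
Lemma prec_into_block b n mn x : (n <= m - 3)%N ->
  is_min (block b n) (block_lt b n) mn -> part b x -> (level x < n)%N ->
  exists2 M, x = M \/ part_lt b x M & (level M < n)%N /\ prec e c ltA ltB M mn.
Proof.
move=> hn Hmn Px hx.
have [p Ep] : exists p, n = (p + 1)%N by exists (n - 1)%N; lia.
subst n; case: (EM (exists v, block b p v)) => [nonempty|empty].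
  have [M HM] := exists_is_max (block_linear b p) nonempty.
  exists M; first by apply: part_le_max HM Px _; lia.
  by split; [rewrite (levelE _ HM.1); lia | apply: prec_max_min HM Hmn].
have Eb : Bblock b p = true.
  by case Eb: (Bblock b p) => //; case: empty; exists (c (i + p%:Z)); apply: hole_in_block.
have hxp : level x <> p by move=> hxp; case: empty; exists x; rewrite -hxp; apply: (part_level Px).2.
have [q Eq] : exists q, p = (q + 1)%N by exists (p - 1)%N; lia.
subst p; have Eq : Bblock b q = false by apply/negbTE; rewrite -Bblock_add1.
have [M HM] := exists_is_max (block_linear b q) (ex_intro _ _ (hole_in_block Eq)).
exists M; first by apply: part_le_max HM Px _; lia.
split; first by rewrite (levelE _ HM.1); lia.
apply: prec_max_skip_min Eq HM (fun w Bw => empty (ex_intro _ w Bw)) _.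
by rewrite -addnA in Hmn.
Qed.

Lemma part_lt_ltV b x y : part_lt b x y -> ltV e c ltA ltB (part b) x y.
Proof.
have [N] := ubnP (level y); elim: N x y => // N IH x y /ltnSE hN [Px [Py lt]].
have [hy By] := part_level Py.
case: lt => [lt|[E lt]]; last first.
  by have [_ Bx] := part_level Px; rewrite E in Bx lt; apply: ltV_block By lt.
have [mn Hmn] := exists_is_min (block_linear b (level y)) (ex_intro _ y By).
have [M xM [lM prec_M]] := prec_into_block hy Hmn Px lt.
have PM : part b M by case: xM => [<-|[_ []]].
have Pmn : part b mn by exists (level y); last exact: Hmn.1.
have M_mn : ltV e c ltA ltB (part b) M mn by apply: t_step.
have M_y : ltV e c ltA ltB (part b) M y.
  case: (EM (mn = y)) => [<- //|nmn]; apply: (t_trans _ _ _ mn) M_mn _.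
  exact: ltV_block Hmn.1 By (Hmn.2 y By (nesym nmn)).
case: xM => [-> //|xM]; apply: (t_trans _ _ _ M) M_y.
by apply: IH xM; lia.
Qed.

Lemma ltV_partE b : ltV e c ltA ltB (part b) = part_lt b.
Proof.
apply: funext => x; apply: funext => y.
apply: propext; split; last exact: part_lt_ltV.
elim=> [u w [Pu [Pw prec_uw]]|u w z _ luw _ lwz]; first exact: prec_part_lt.
case: (part_lt_linear b) => _ [tr _].
by apply: (tr u w z _ _ _ luw lwz); [exact: luw.1 | exact: luw.2.1 | exact: lwz.2.1].
Qed.

Lemma Abig_partE : Abig e c i j = part false.
Proof.
by apply: funext => v; apply: propext; apply: Abig_part.
Qed.

Lemma Bbig_partE : Bbig e c i j = part true.
Proof.
by apply: funext => v; apply: propext; apply: Bbig_part.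
Qed.

End Hole.

Theorem lemma3p8 (T : finType) (e : rel T)
  (e_sym : forall x y : T, e x y = e y x) (e_irr : forall x : T, e x x = false)
  (Gconn : connected_graph e) (Gabp : almost_bip_perm e) (Ghole : has_hole e)
  (m : nat) (c : int -> T) (Cshort : shortest_hole e m c)
  (ltA ltB : int -> T -> T -> Prop)
  (Hlin : linear_extensions e c m ltA ltB)
  (i j : int) (Hij : i <= j) (Hji : j - i = m%:Z - 3) :
  let U := Abig e c i j in
  let W := Bbig e c i j in
  let ltU := ltV e c ltA ltB U in
  let ltW := ltV e c ltA ltB W in
  bip_perm_classes e U W /\
  strict_linear_on U ltU /\ strict_linear_on W ltW /\
  adjacency_prop e U W ltW /\ enclosure_prop e U W ltW /\
  adjacency_prop e W U ltU /\ enclosure_prop e W U ltU.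
Proof.
case: Cshort => hole no_shorter_hole; case: Gabp => _ [no_X2 [_ [no_triangle no_C5_to_C9]]].
have m_ge10 := hole_length_ge10 hole no_C5_to_C9.
rewrite /= (Abig_partE e c m_ge10 Hji) (Bbig_partE e c m_ge10 Hji) !(ltV_partE hole m_ge10 Hji Hlin).
have sU := part_leveled e_sym e_irr hole no_triangle no_shorter_hole m_ge10 no_X2 Hji Hlin false.
have sW := part_leveled e_sym e_irr hole no_triangle no_shorter_hole m_ge10 no_X2 Hji Hlin true.
simpl in sU, sW.
have linU := part_lt_linear hole m_ge10 Hji Hlin false.
have linW := part_lt_linear hole m_ge10 Hji Hlin true.
split.
  split; first exact: ls_disj sU.
  split; first exact: ls_indep sU.
  split; first exact: ls_indep sW.
  exact: (leveled_perm_graph e_sym sU sW linU linW).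
split; first exact: linU.
split; first exact: linW.
split; first exact: leveled_adjacency sU.
split; first exact: (leveled_enclosure e_sym sU sW linU).
split; first exact: leveled_adjacency sW.
exact: (leveled_enclosure e_sym sW sU linW).
Qed.
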